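(* Let $\Sigma=\{xtyxsy\approx xtxyxsy,\ xtysyx\approx xtysxyx\}$. Let $\mathbf w=\mathbf v_1\mathbf v_2x\mathbf v_3$ where $\mathbf v_1,\mathbf v_2,\mathbf v_3$ are words and $x$ is a letter. If $\mathbf v_1$ contains $x$ and $\mathbf v_2$ contains no letter that is simple in $\mathbf w$, then $\Sigma$ implies the identity $\mathbf w\approx\mathbf v_1x\mathbf v_2x\mathbf v_3$ (i.e., every monoid satisfying $\Sigma$ satisfies it).
   Context: Words are elements of the free monoid over a countably infinite alphabet. A letter is simple in a word if it occurs in it exactly once. *)

From mathcomp Require Import all_boot.
Set Implicit Arguments. Unset Strict Implicit. Unset Printing Implicit Defensive.

Definition word := seq nat.

Definition simple (a : nat) (w : word) : bool := count_mem a w == 1.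

Definition identity := (word * word)%type.

Record monoid := Monoid {
  carrier :> Type;
  mop : carrier -> carrier -> carrier;
  mone : carrier;
  mopA : forall a b c, mop a (mop b c) = mop (mop a b) c;
  mop1l : forall a, mop mone a = a;
  mop1r : forall a, mop a mone = a }.

Definition eval (M : monoid) (phi : nat -> M) (w : word) : M :=
  foldr (fun a m => mop (phi a) m) (mone M) w.

Definition satisfies (M : monoid) (id : identity) : Prop :=
  forall phi : nat -> M, eval phi id.1 = eval phi id.2.

Definition set_implies (Sigma : seq identity) (id : identity) : Prop :=
  forall M : monoid, (forall s, s \in Sigma -> satisfies M s) -> satisfies M id.

(* Letters x = 0, y = 1, t = 2, s = 3. *)
Definition Sigma33 : seq identity :=
  [:: ([:: 0; 2; 1; 0; 3; 1], [:: 0; 2; 0; 1; 0; 3; 1]);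
      ([:: 0; 2; 1; 3; 1; 0], [:: 0; 2; 1; 3; 0; 1; 0])].

From mathcomp Require Import all_boot zify.

Set Implicit Arguments.
Unset Strict Implicit.
Unset Printing Implicit Defensive.

(** Instances of [Sigma33] show that in a word [P y x B] with [x] occurring
in [P], a copy of [x] may be inserted before [y] whenever [y] occurs in [P] or
in [B]; for [y] in [P] this is [P y x B = P y y x B = P y x y x B = P x y x B].
Induction on [v2] from the right then moves the copy of [x] to the front of
[v2]: insert it before the last letter [y] of [v2], push it across the rest of
[v2], and remove the copy in front of [y] by the same rule. The letters of
[v2] are not simple, so each of them occurs in the required place. *)

Section Evaluation.

Variable M : monoid.

Lemma eval_cat (phi : nat -> M) u v :
  eval phi (u ++ v) = mop (eval phi u) (eval phi v).
Proof.
elim: u => [|a u IHu] /=; first by rewrite mop1l.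
by rewrite IHu mopA.
Qed.

Lemma eval_ctx (phi : nat -> M) p q u v :
  eval phi u = eval phi v -> eval phi (p ++ u ++ q) = eval phi (p ++ v ++ q).
Proof. by rewrite !eval_cat => ->. Qed.

Lemma eval_flatten_map (phi : nat -> M) (sigma : nat -> word) w :
  eval phi (flatten (map sigma w)) = eval (fun a => eval phi (sigma a)) w.
Proof. by elim: w => [|a w IHw] //=; rewrite eval_cat IHw. Qed.

Lemma satisfies_subst u v : satisfies M (u, v) ->
  forall (phi : nat -> M) (sigma : nat -> word),
  eval phi (flatten (map sigma u)) = eval phi (flatten (map sigma v)).
Proof. by move=> Muv phi sigma; rewrite !eval_flatten_map; apply: Muv. Qed.

End Evaluation.

Lemma simpleN_cat_cons y s t : ~~ simple y (s ++ y :: t) -> y \in s ++ t.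
Proof.
by rewrite /simple count_cat /= eqxx addnCA add1n eqSS -count_cat -lt0n
  -has_count has_pred1.
Qed.

Lemma simpleN_insert y a s t :
  y \in s ++ t -> ~~ simple y (s ++ t) -> ~~ simple y (s ++ a :: t).
Proof.
rewrite /simple -has_pred1 has_count !count_cat /=.
lia.
Qed.

Definition subst_xyts (a b t s : word) (n : nat) : word :=
  match n with 0 => a | 1 => b | 2 => t | _ => s end.

Section SigmaConsequences.

Variable M : monoid.
Hypothesis M_Sigma : forall s, s \in Sigma33 -> satisfies M s.
Variable phi : nat -> M.
Local Notation ev := (eval phi).

Lemma sigma1_words a t b s :
  ev (a ++ t ++ b ++ a ++ s ++ b) = ev (a ++ t ++ a ++ b ++ a ++ s ++ b).
Proof.
have := satisfies_subst (M_Sigma (mem_head _ _)) phi (subst_xyts a b t s).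
by rewrite /= !cats0.
Qed.

Lemma sigma2_words a t b s :
  ev (a ++ t ++ b ++ s ++ b ++ a) = ev (a ++ t ++ b ++ s ++ a ++ b ++ a).
Proof.
have := satisfies_subst (M_Sigma (mem_last _ _)) phi (subst_xyts a b t s).
by rewrite /= !cats0.
Qed.

Lemma sigma_dup a P B : a \in P -> ev (P ++ a :: B) = ev (P ++ a :: a :: B).
Proof.
case/splitPr: P / => P1 P2.
have := eval_ctx P1 [::] (sigma1_words [:: a] P2 [::] B).
by rewrite !cats0 -!catA.
Qed.

Lemma sigma1_letters a b P B : a \in P -> b \in B ->
  ev (P ++ b :: a :: B) = ev (P ++ a :: b :: a :: B).
Proof.
case/splitPr: P / => P1 P2; case/splitPr: B / => B1 B2.
have := eval_ctx P1 B2 (sigma1_words [:: a] P2 [:: b] B1).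
by rewrite -!catA.
Qed.

Lemma sigma2_letters a b P B : a \in P ->
  ev (P ++ b :: b :: a :: B) = ev (P ++ b :: a :: b :: a :: B).
Proof.
case/splitPr: P / => P1 P2.
have := eval_ctx P1 B (sigma2_words [:: a] P2 [:: b] [::]).
by rewrite -!catA.
Qed.

Lemma sigma_insert_before x y P B : x \in P -> y \in P ++ B ->
  ev (P ++ y :: x :: B) = ev (P ++ x :: y :: x :: B).
Proof.
rewrite mem_cat => xP /orP [yP | yB]; last exact: sigma1_letters.
rewrite sigma_dup // sigma2_letters //.
by rewrite -(sigma1_letters yP (mem_head x B)).
Qed.

Lemma sigma_insert_copy x u P B : x \in P ->
  {in u, forall y, ~~ simple y (P ++ u ++ x :: B)} ->
  ev (P ++ u ++ x :: B) = ev (P ++ x :: u ++ x :: B).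
Proof.
elim/last_ind: u B => [|u y IHu] B xP u_nonsimple; first exact: sigma_dup.
rewrite cat_rcons in u_nonsimple *.
have y_elsewhere : y \in (P ++ u) ++ B.
  have /simpleN_cat_cons : ~~ simple y ((P ++ u) ++ y :: x :: B).
    by rewrite -catA; apply: u_nonsimple; rewrite mem_rcons mem_head.
  rewrite -catA !mem_cat inE.
  by case/or3P => [/orP[] ->|/eqP ->|->]; rewrite ?xP ?orbT.
have xPu : x \in P ++ u by rewrite mem_cat xP.
have xPxu : x \in P ++ x :: u by rewrite mem_cat xP.
have y_elsewhere' : y \in (P ++ x :: u) ++ B.
  by move: y_elsewhere; rewrite !mem_cat inE => /orP[/orP[]|] ->; rewrite ?orbT.
rewrite catA (sigma_insert_before xPu y_elsewhere) -catA IHu //.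
  by have := sigma_insert_before xPxu y_elsewhere'; rewrite -!catA => <-.
move=> z zu; rewrite catA; apply: simpleN_insert.
  by rewrite !mem_cat zu orbT.
by rewrite -catA; apply: u_nonsimple; rewrite mem_rcons inE zu orbT.
Qed.

End SigmaConsequences.

Theorem lemma3p3 (v1 v2 v3 : seq nat) (x : nat) :
  x \in v1 ->
  (forall a, a \in v2 -> ~~ simple a (v1 ++ v2 ++ x :: v3)) ->
  set_implies Sigma33 (v1 ++ v2 ++ x :: v3, v1 ++ x :: v2 ++ x :: v3).
Proof.
move=> xv1 v2_nonsimple M M_Sigma phi.
exact: sigma_insert_copy.
Qed.
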